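(* Let $n\ge2$, $A\in\mathbb{R}^{n\times m}$, $B\in\mathbb{R}^{m\times n}$, and let $C$ be a cycle in the DSR$^{[2]}$ graph $G^{[2]}_{A,B}$. Then $C$ is direct if it has an even number of inversions, and twisted otherwise.
   Context: DSR graphs: for $A\in\mathbb{R}^{n\times m}$, $B\in\mathbb{R}^{m\times n}$, $G_{A,B}$ is the signed bipartite digraph with S-vertices $S_1,\dots,S_n$ and R-vertices $R_1,\dots,R_m$, an arc $R_j\to S_i$ of sign $\mathrm{sign}(A_{ij})$ iff $A_{ij}\ne0$, an arc $S_i\to R_j$ of sign $\mathrm{sign}(B_{ji})$ iff $B_{ji}\ne0$, with antiparallel arcs of equal sign merged into an undirected edge. Walks traverse edges consistently with orientation; a cycle is a nonempty closed walk with no repeated vertex except first$=$last. DSR$^{[2]}$ graph: $\overline{\mathbf L}^A\in\mathbb{R}^{\binom n2\times mn}$ has rows indexed by $(i,j)$, $i<j$, columns by $(k,l)$, $1\le k\le m$, $1\le l\le n$, with entries $A_{jk}$ if $l=i$, $-A_{ik}$ if $l=j$, $0$ otherwise; $\underline{\mathbf L}^B\in\mathbb{R}^{mn\times\binom n2}$ has $(k,l),(i,j)$ entry $B_{kj}$ if $l=i$, $-B_{ki}$ if $l=j$, $0$ otherwise. $G^{[2]}_{A,B}:=G_{\overline{\mathbf L}^A,\underline{\mathbf L}^B}$, with S-vertices written $ij=ji$ and R-vertices $k^l$; an edge $(ij,k^l)$ exists only if $l\in\{i,j\}$. The projection $\pi$ sends an edge $(ij,k^j)$ of $G^{[2]}_{A,B}$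 to the edge $(S_i,R_k)$ of $G_{A,B}$. Direct/twisted: let $C$ be a cycle of $G^{[2]}_{A,B}$ with S-vertex sequence $a_1b_1,a_2b_2,\dots,a_{T+1}b_{T+1}=a_1b_1$, and write the segment of $C$ from $a_rb_r$ to $a_{r+1}b_{r+1}$ as $(a_rb_r,k^l,a_{r+1}b_{r+1})$ with $l$ the common index; its projection is a length-2 walk in $G_{A,B}$ from $S_x$ to $S_y$, where $x$ is the element of $\{a_r,b_r\}$ other than $l$ and $y$ the element of $\{a_{r+1},b_{r+1}\}$ other than $l$. Starting from the two empty walks at $S_{a_1}$ and $S_{b_1}$, for $r=1,\dots,T$ append this projected segment to whichever of the two current walks ends at $S_x$ (the two current walks always end at the two distinct vertices $S_{a_r},S_{b_r}$). The resulting walks $W',W''$ are either both closed, in which case $C$ is called direct, or one goes from $S_{a_1}$ to $S_{b_1}$ and the other back, in which case $C$ is called twisted. Inversions: two consecutive S-vertices of $C$ (including the last and first) are distinct and share exactly one index; writing them as $ij$ and $ij'$ with common index $i$, the pair is an inversion if $(i-j)(i-j')<0$. *)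

From HB Require Import structures.
From mathcomp Require Import all_boot all_order all_algebra.
From mathcomp Require Import reals.
Set Implicit Arguments. Unset Strict Implicit. Unset Printing Implicit Defensive.
Import Order.TTheory GRing.Theory Num.Theory.
Local Open Scope ring_scope.

Section DSR.
Variable R : realType.

(* S-vertices are indexed by X, R-vertices by Y; a vertex is [inl s] (S-vertex)
   or [inr r] (R-vertex).  A : X -> Y -> R (entry A_{ij} : arc R_j -> S_i),
   B : Y -> X -> R (entry B_{ji} : arc S_i -> R_j).  Merging antiparallel arcs
   of equal sign into an undirected edge does not change in which directions a
   vertex pair may be traversed, so a walk may go from u to v exactly when
   there is an arc u -> v. *)
Definition dsr_step (X Y : finType) (A : X -> Y -> R) (B : Y -> X -> R) :
    rel (X + Y) :=
  fun u v => match u, v with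
             | inr j, inl i => A i j != 0
             | inl i, inr j => B j i != 0
             | _, _ => false
             end.

Definition dsr_cycle (X Y : finType) (A : X -> Y -> R) (B : Y -> X -> R)
    (c : seq (X + Y)) : bool :=
  [&& c != [::], uniq c & cycle (dsr_step A B) c].

(* Unordered pairs ij = ji of distinct indices, stored as (i,j) with i < j. *)
Definition pair2 (n : nat) := {p : 'I_n * 'I_n | (p.1 < p.2)%N}.
Definition pfst n (p : pair2 n) : 'I_n := (val p).1.
Definition psnd n (p : pair2 n) : 'I_n := (val p).2.
Definition pmem n (p : pair2 n) (l : 'I_n) : bool := (l == pfst p) || (l == psnd p).
(* the element of p other than l (meaningful when l belongs to p) *)
Definition pother n (p : pair2 n) (l : 'I_n) : 'I_n :=
  if l == pfst p then psnd p else pfst p.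

(* \overline{L}^A : rows (i,j), i<j; columns (k,l). *)
Definition LA n m (A : 'M[R]_(n, m)) : pair2 n -> ('I_m * 'I_n) -> R :=
  fun p kl => if kl.2 == pfst p then A (psnd p) kl.1
              else if kl.2 == psnd p then - A (pfst p) kl.1 else 0.
(* \underline{L}^B : rows (k,l); columns (i,j), i<j. *)
Definition LB n m (B : 'M[R]_(m, n)) : ('I_m * 'I_n) -> pair2 n -> R :=
  fun kl p => if kl.2 == pfst p then B kl.1 (psnd p)
              else if kl.2 == psnd p then - B kl.1 (pfst p) else 0.

Definition vert2 n m := (pair2 n + ('I_m * 'I_n))%type.

Definition dsr2_cycle n m (A : 'M[R]_(n, m)) (B : 'M[R]_(m, n))
    (c : seq (vert2 n m)) : bool :=
  dsr_cycle (LA A) (LB B) c.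

Definition getS n m (v : vert2 n m) : option (pair2 n) :=
  if v is inl s then Some s else None.
Definition getR n m (v : vert2 n m) : option ('I_m * 'I_n) :=
  if v is inr r then Some r else None.
Definition isS n m (v : vert2 n m) : bool := if v is inl _ then true else false.

(* the cycle rotated so as to start at its first S-vertex:
   [:: a_1b_1; r_1; a_2b_2; r_2; ...; a_Tb_T; r_T] *)
Definition cyc_fromS n m (c : seq (vert2 n m)) := rot (find (@isS n m) c) c.
Definition Sseq n m (c : seq (vert2 n m)) := pmap (@getS n m) (cyc_fromS c).
(* R-vertex sequence r_1, ..., r_T (r_t lies between a_tb_t and a_{t+1}b_{t+1}) *)
Definition Rseq n m (c : seq (vert2 n m)) := pmap (@getR n m) (cyc_fromS c).
(* segments (a_rb_r, k^l, a_{r+1}b_{r+1}), r = 1..T, with a_{T+1}b_{T+1} = a_1b_1 *)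
Definition segments n m (c : seq (vert2 n m)) :=
  zip (Sseq c) (zip (Rseq c) (rot 1 (Sseq c))).

(* vertices of G_{A,B}: S_i = inl i, R_k = inr k *)
Definition vert1 n m := ('I_n + 'I_m)%type.
(* a walk in G_{A,B}: its start vertex and the subsequent vertices *)
Definition walk n m := (vert1 n m * seq (vert1 n m))%type.
Definition wstart n m (w : walk n m) := w.1.
Definition wend n m (w : walk n m) := last w.1 w.2.

(* append the projection (S_x, R_k, S_y) of the segment (s, k^l, s') to the
   current walk ending at S_x, where x = other(s,l), y = other(s',l) *)
Definition proj_step n m (st : walk n m * walk n m)
    (sg : pair2 n * (('I_m * 'I_n) * pair2 n)) : walk n m * walk n m :=
  let: (s, (kl, s')) := sg in
  let x := pother s kl.2 in
  let y := pother s' kl.2 in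
  let ext := [:: inr kl.1; inl y] in
  if wend st.1 == inl x then ((st.1.1, st.1.2 ++ ext), st.2)
  else if wend st.2 == inl x then (st.1, (st.2.1, st.2.2 ++ ext))
  else st.

(* the pair of walks (W', W'') obtained from the cycle, W' starting at S_{a_1}
   and W'' at S_{b_1} *)
Definition proj_walks n m (c : seq (vert2 n m)) : option (walk n m * walk n m) :=
  if Sseq c is s1 :: _ then
    Some (foldl (@proj_step n m)
                ((inl (pfst s1), [::]), (inl (psnd s1), [::])) (segments c))
  else None.

Definition direct n m (c : seq (vert2 n m)) : bool :=
  if proj_walks c is Some (w1, w2) then
    (wend w1 == wstart w1) && (wend w2 == wstart w2)
  else false.

Definition twisted n m (c : seq (vert2 n m)) : bool :=
  if proj_walks c is Some (w1, w2) then
    [&& wend w1 == wstart w2 & wend w2 == wstart w1]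
  else false.

Definition inversion n (p q : pair2 n) : bool :=
  [exists i : 'I_n, exists j : 'I_n, exists j' : 'I_n,
     [&& i != j, i != j', j != j', pmem p i, pmem p j, pmem q i, pmem q j' &
         ((i%:Z - j%:Z) * (i%:Z - j'%:Z) < 0)%R]].

Definition num_inversions n m (c : seq (vert2 n m)) : nat :=
  count (fun pq => inversion pq.1 pq.2) (zip (Sseq c) (rot 1 (Sseq c))).

End DSR.

From HB Require Import structures.
From mathcomp Require Import all_boot all_order all_algebra.
From mathcomp Require Import reals.
Set Implicit Arguments. Unset Strict Implicit. Unset Printing Implicit Defensive.
Import Order.TTheory GRing.Theory Num.Theory.
Local Open Scope ring_scope.

(* Record at each S-vertex ij, i < j, whether W' currently ends at S_i and
   W'' at S_j, or the other way round.  A segment (ij, k^l, ij') moves the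
   walk ending at the non-shared index of ij to the non-shared index of ij',
   so this orientation flips exactly when l is the smaller index of one pair
   and the larger of the other, i.e. when l lies strictly between the two
   non-shared indices: this is the inversion condition.  Once around the
   cycle, both walks are closed iff the orientation flipped an even number of
   times, and otherwise each leads to the other's start. *)

Lemma sub_mul_sub_lt0 (l x y : nat) : x != l -> y != l ->
  ((l%:Z - x%:Z) * (l%:Z - y%:Z) < 0) = (l < x)%N (+) (l < y)%N.
Proof.
move=> xl yl.
by rewrite neq0_mulr_lt0 ?subr_lt0 ?ltz_nat // subr_eq0 eqz_nat eq_sym.
Qed.

Section UnorderedPairs.
Variable n : nat.
Implicit Types (p q : pair2 n) (l : 'I_n).

Lemma pfst_lt_psnd p : (pfst p < psnd p)%N.
Proof. exact: (valP p). Qed.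

Lemma eq_pfst_psnd p : (pfst p == psnd p) = false.
Proof. exact: ltn_eqF (pfst_lt_psnd p). Qed.

Lemma eq_psnd_pfst p : (psnd p == pfst p) = false.
Proof. by rewrite eq_sym eq_pfst_psnd. Qed.

Lemma pmem_cases p l : pmem p l ->
  [/\ l = pfst p, pother p l = psnd p & l == pfst p] \/
  [/\ l = psnd p, pother p l = pfst p & (l == pfst p) = false].
Proof.
rewrite /pmem /pother => /orP[]/eqP->; first by left; rewrite eqxx.
by right; rewrite eq_psnd_pfst.
Qed.

Lemma pmem_pother p l : pmem p l -> pmem p (pother p l).
Proof. by case/pmem_cases=> -[-> -> _]; rewrite /pmem eqxx ?orbT. Qed.

Lemma pother_neq p l : pmem p l -> pother p l != l.
Proof.
by case/pmem_cases=> -[-> -> _]; rewrite ?eq_pfst_psnd ?eq_psnd_pfst.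
Qed.

Lemma pmem2 p a b c : pmem p a -> pmem p b -> pmem p c -> a != b ->
  c = a \/ c = b.
Proof.
by rewrite /pmem => /orP[]/eqP-> /orP[]/eqP-> /orP[]/eqP->; rewrite ?eqxx; auto.
Qed.

Lemma pother_unique p l j : pmem p l -> pmem p j -> j != l -> j = pother p l.
Proof.
move=> pl pj jl; have lo : l != pother p l by rewrite eq_sym pother_neq.
case: (pmem2 pl (pmem_pother pl) pj lo) => // jE.
by rewrite jE eqxx in jl.
Qed.

Lemma ltn_pother p l : pmem p l -> (l < pother p l)%N = (l == pfst p).
Proof.
case/pmem_cases=> -[-> -> ->]; first exact: pfst_lt_psnd.
by rewrite ltnNge ltnW ?pfst_lt_psnd.
Qed.

Lemma inversionE p q l : pmem p l -> pmem q l ->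
  inversion p q = (l == pfst p) (+) (l == pfst q).
Proof.
move=> pl ql; have pol := pother_neq pl; have qol := pother_neq ql.
have signE : ((l%:Z - (pother p l)%:Z) * (l%:Z - (pother q l)%:Z) < 0)
    = (l == pfst p) (+) (l == pfst q).
  by rewrite sub_mul_sub_lt0 // !ltn_pother.
apply/idP/idP.
- case/existsP=> i /existsP[j /existsP[j' /and5P[ij ij' jj' pi]]].
  case/and4P=> pj qi qj' ijj'.
  have il : i = l.
    apply/eqP/negP => /negP il.
    case: (pmem2 pi pl pj il) => jE; first by rewrite jE eqxx in ij.
    case: (pmem2 qi ql qj' il) => j'E; first by rewrite j'E eqxx in ij'.
    by rewrite jE j'E eqxx in jj'.
  subst i.
  rewrite -signE -(pother_unique pl pj) 1?eq_sym //.
  by rewrite -(pother_unique ql qj') 1?eq_sym.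
- rewrite -signE => ineq.
  apply/existsP; exists l; apply/existsP; exists (pother p l).
  apply/existsP; exists (pother q l).
  rewrite pl ql !pmem_pother // ineq !(eq_sym l) pol qol /= andbT.
  by apply/eqP=> pqE; move: ineq; rewrite pqE -expr2 ltNge sqr_ge0.
Qed.

End UnorderedPairs.

Section WalkOrientation.
Variables n m : nat.

Local Notation segment := (pair2 n * (('I_m * 'I_n) * pair2 n))%type.

Definition walks_end_at (st : walk n m * walk n m) (p : pair2 n) (b : bool) :=
  if b then wend st.1 = inl (pfst p) /\ wend st.2 = inl (psnd p)
  else wend st.1 = inl (psnd p) /\ wend st.2 = inl (pfst p).

Lemma proj_step_end st p k l q b : pmem p l -> pmem q l ->
  walks_end_at st p b ->
  let st' := proj_step st (p, ((k, l), q)) in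
  [/\ walks_end_at st' q (b (+) inversion p q),
      wstart st'.1 = wstart st.1 & wstart st'.2 = wstart st.2].
Proof.
move=> pl ql; rewrite (inversionE pl ql) /walks_end_at /proj_step /=.
case/pmem_cases: pl => -[lE -> ->]; case/pmem_cases: ql => -[l'E -> ->];
case: b => -[end1 end2];
rewrite end1 end2 !(inj_eq inl_inj) ?eqxx ?eq_pfst_psnd ?eq_psnd_pfst /=;
move: end1 end2; rewrite /wend /wstart /= ?last_cat /=;
by do !split; congruence.
Qed.

Fixpoint linked (p : pair2 n) (segs : seq segment) : Prop :=
  if segs is (p', (kl, q)) :: segs' then
    [/\ p' = p, pmem p kl.2, pmem q kl.2 & linked q segs']
  else True.

Lemma foldl_proj_step_end segs p st b : linked p segs -> walks_end_at st p b ->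
  let st' := foldl (@proj_step n m) st segs in
  [/\ walks_end_at st' (last p [seq s.2.2 | s <- segs])
        (b (+) odd (count (fun s => inversion s.1 s.2.2) segs)),
      wstart st'.1 = wstart st.1 & wstart st'.2 = wstart st.2].
Proof.
elim: segs p st b => [|[p' [[k l] q]] segs IH] p st b.
  by rewrite /= addbF.
case=> -> pl ql lsegs st_end.
have [st1_end start1 start2] := proj_step_end k pl ql st_end.
have -> : foldl (@proj_step n m) st ((p, (k, l, q)) :: segs) =
          foldl (@proj_step n m) (proj_step st (p, (k, l, q))) segs by [].
move: (proj_step st _) st1_end start1 start2 => st1 st1_end start1 start2.
have [IHend IHstart1 IHstart2] := IH _ _ _ lsegs st1_end.
by rewrite /= oddD oddb addbA; split; congruence.
Qed.

End WalkOrientation.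

Section CycleSegments.
Variables (R : realType) (n m : nat) (A : 'M[R]_(n, m)) (B : 'M[R]_(m, n)).
Local Notation e := (dsr_step (LA A) (LB B)).

Lemma dsr2_step_SR p kl : e (inl p) (inr kl) -> pmem p kl.2.
Proof.
rewrite /= /LB /pmem.
by case: (kl.2 == pfst p); case: (kl.2 == psnd p); rewrite ?eqxx.
Qed.

Lemma dsr2_step_RS p kl : e (inr kl) (inl p) -> pmem p kl.2.
Proof.
rewrite /= /LA /pmem.
by case: (kl.2 == pfst p); case: (kl.2 == psnd p); rewrite ?eqxx.
Qed.

Definition segments_from (s : pair2 n) (rest : seq (vert2 n m)) se :=
  zip (s :: pmap (@getS n m) rest)
      (zip (pmap (@getR n m) rest) (rcons (pmap (@getS n m) rest) se)).

Lemma path_segments_from rest s se :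
  path e (inl s) rest -> e (last (inl s) rest) (inl se) ->
  [/\ linked s (segments_from s rest se),
      last s [seq x.2.2 | x <- segments_from s rest se] = se &
      [seq (x.1, x.2.2) | x <- segments_from s rest se] =
        zip (s :: pmap (@getS n m) rest) (rcons (pmap (@getS n m) rest) se)].
Proof.
move: (leqnn (size rest)); move: {2}(size rest) => N.
elim: N rest s => [|N IH] [|[s'|kl] rest] s //= rest_size.
case: rest rest_size => [|[s'|kl'] rest] //= rest_size.
- move=> /andP[sk _] ks.
  by rewrite /segments_from /=; split=> //; split=> //;
    [exact: dsr2_step_SR sk | exact: dsr2_step_RS ks].
- move=> /andP[sk /andP[ks' spath]] slast.
  have [lrest lastE mapE] := IH rest s' (ltnW rest_size) spath slast.
  rewrite /segments_from /= in lrest lastE mapE *.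
  by rewrite lastE mapE; split=> //; split=> //;
    [exact: dsr2_step_SR sk | exact: dsr2_step_RS ks'].
- by rewrite andbF.
Qed.

Lemma cyc_fromS_cons C : dsr2_cycle A B C ->
  exists s rest, cyc_fromS C = inl s :: rest /\ cycle e (inl s :: rest).
Proof.
case/and3P; case: C => [//|v C] _ _ Ccycle.
(* S- and R-vertices alternate, so the cycle meets an S-vertex. *)
have hasS : has (@isS n m) (v :: C).
  by case: v Ccycle => // kl; case: C => [|[]] //= ? ? /andP[].
have findC : (find (@isS n m) (v :: C) < size (v :: C))%N by rewrite -has_find.
have : cycle e (cyc_fromS (v :: C)) by rewrite rot_cycle.
rewrite /cyc_fromS /rot (drop_nth v findC).
by move: (nth_find v hasS); case: (nth v _ _) => // s _ rotC; do 2!eexists.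
Qed.

End CycleSegments.

Theorem proposition5p2 (R : realType) (n m : nat) (hn : (2 <= n)%N)
    (A : 'M[R]_(n, m)) (B : 'M[R]_(m, n)) (C : seq (vert2 n m)) :
  dsr2_cycle A B C ->
  (~~ odd (num_inversions C) -> direct C) /\
  (odd (num_inversions C) -> twisted C).
Proof.
case/cyc_fromS_cons=> s [rest [Crot]].
rewrite /= rcons_path => /andP[spath slast].
have [lsegs lastE mapE] := path_segments_from spath slast.
have SseqE : Sseq C = s :: pmap (@getS n m) rest by rewrite /Sseq Crot.
have segmentsE : segments C = segments_from s rest s.
  by rewrite /segments SseqE /Rseq Crot rot1_cons.
have invE : num_inversions C =
    count (fun x => inversion x.1 x.2.2) (segments_from s rest s).
  by rewrite /num_inversions SseqE rot1_cons -mapE count_map.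
have start_end :
  walks_end_at (m := m) ((inl (pfst s), [::]), (inl (psnd s), [::])) s true.
  by [].
have [] := foldl_proj_step_end lsegs start_end.
rewrite /direct /twisted /proj_walks SseqE -invE lastE -segmentsE.
case: (foldl _ _ _) => w1 w2; rewrite /walks_end_at /wstart /=.
by case: odd => -[-> ->] -> ->; rewrite !eqxx.
Qed.
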